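(* Let $F_2$ be the free group on $\{x,y\}$, $\sigma = (\{x\}, y)$, $\tau = (\{y\}, x)$. Let $w$ be a cyclic word in $F_2$ and let $\psi$ be a chain of the form (C1) $\tau^{m_k}\sigma^{l_k} \cdots \tau^{m_1}\sigma^{l_1}$ (respectively (C2) $\tau^{-m_k}\sigma^{-l_k} \cdots \tau^{-m_1}\sigma^{-l_1}$), with $k\in\mathbb{N}$ and all $l_i, m_i \ge 0$. If $\psi$ contains at least $\|w\|$ factors of $\sigma$ (respectively $\sigma^{-1}$), i.e. $\sum_i l_i \ge \|w\|$, then no proper cancellation occurs in passing from $\psi(w)$ to $\sigma\psi(w)$ (respectively from $\psi(w)$ to $\sigma^{-1}\psi(w)$). If $\psi$ contains at least $\|w\|$ factors of $\tau$ (respectively $\tau^{-1}$), i.e. $\sum_i m_i \ge \|w\|$, then no proper cancellation occurs in passing from $\psi(w)$ to $\tau\psi(w)$ (respectively from $\psi(w)$ to $\tau^{-1}\psi(w)$).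
   Context: $\sigma$ is the automorphism with $\sigma(x) = xy$, $\sigma(y) = y$; $\tau$ is the automorphism with $\tau(y) = yx$, $\tau(x) = x$. A cyclic word is the set of all cyclic permutations of a cyclically reduced word; $\|w\|$ is its length. An automorphism $\alpha \in \{\sigma^{\pm1},\tau^{\pm1}\}$ is applied to a cyclic word $w$ by replacing each letter $c$ by $\alpha(c)$ and cyclically freely reducing. For $\alpha = \sigma^{\pm1}$, a subword $xy^rx^{-1}$ ($r \neq 0$) of $w$ is mapped to itself although cancellation occurs in its image (e.g. $\sigma(xy^rx^{-1}) = xy\cdot y^r\cdot y^{-1}x^{-1}$); similarly for $\alpha=\tau^{\pm1}$ and subwords $yx^ry^{-1}$ ($r\neq 0$). Such cancellation is called trivial cancellation; any cancellation that is not trivial is called proper cancellation (e.g. $\sigma$ applied to a subword $xy^{-r}x$, $r\ge1$, yields $xy^{-r+1}xy$, which involves proper cancellation). *)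

From HB Require Import structures.
From mathcomp Require Import all_boot.
Set Implicit Arguments. Unset Strict Implicit. Unset Printing Implicit Defensive.

(* Letters of F_2 = F(x,y):  lx = x, lX = x^-1, ly = y, lY = y^-1. *)
Inductive letter := lx | lX | ly | lY.

Definition letter_eqb (a b : letter) : bool :=
  match a, b with
  | lx, lx | lX, lX | ly, ly | lY, lY => true
  | _, _ => false
  end.

Lemma letter_eqP : Equality.axiom letter_eqb.
Proof. by case; case; constructor. Qed.

HB.instance Definition _ := hasDecEq.Build letter letter_eqP.

Definition linv (a : letter) : letter :=
  match a with lx => lX | lX => lx | ly => lY | lY => ly end.

Definition is_xletter (a : letter) : bool := (a == lx) || (a == lX).
Definition is_yletter (a : letter) : bool := (a == ly) || (a == lY).

Fixpoint reduced (w : seq letter) : bool :=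
  match w with
  | a :: ((b :: _) as t) => (b != linv a) && reduced t
  | _ => true
  end.

Definition cyc_reduced (w : seq letter) : bool :=
  reduced w && (if w is a :: t then last a t != linv a else true).

Definition free_reduce (w : seq letter) : seq letter :=
  foldr (fun c acc => match acc with
                      | d :: t => if d == linv c then t else c :: acc
                      | [::] => [:: c]
                      end) [::] w.

Fixpoint strip_ends (fuel : nat) (w : seq letter) : seq letter :=
  match fuel with
  | 0 => w
  | n.+1 =>
      match w with
      | a :: t =>
          if (t != [::]) && (last a t == linv a) then strip_ends n (behead (belast a t))
          else w
      | [::] => w
      end
  end.

Definition cyc_reduce (w : seq letter) : seq letter :=
  let v := free_reduce w in strip_ends (size v) v.

Definition sigma_img (a : letter) : seq letter :=
  match a with lx => [:: lx; ly] | lX => [:: lY; lX] | ly => [:: ly] | lY => [:: lY] end.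
Definition sigmaI_img (a : letter) : seq letter :=
  match a with lx => [:: lx; lY] | lX => [:: ly; lX] | ly => [:: ly] | lY => [:: lY] end.
Definition tau_img (a : letter) : seq letter :=
  match a with ly => [:: ly; lx] | lY => [:: lX; lY] | lx => [:: lx] | lX => [:: lX] end.
Definition tauI_img (a : letter) : seq letter :=
  match a with ly => [:: ly; lX] | lY => [:: lx; lY] | lx => [:: lx] | lX => [:: lX] end.

Definition subst (f : letter -> seq letter) (w : seq letter) : seq letter :=
  flatten (map f w).

(* application of the automorphism to a cyclic word: substitute and cyclically
   freely reduce (the result is a representative of the image cyclic word) *)
Definition act (f : letter -> seq letter) (w : seq letter) : seq letter :=
  cyc_reduce (subst f w).

Definition cancelled_pairs (f : letter -> seq letter) (w : seq letter) : nat :=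
  (size (subst f w) - size (act f w)) %/ 2.

(* a trivial-cancellation subword g h^r g^-1 (r <> 0, h the other generator)
   starting at the first letter of s (s read cyclically via rotations) *)
Definition trivial_at (g : letter) (isother : letter -> bool) (s : seq letter) : bool :=
  match s with
  | a :: t => (a == g) &&
      (let k := find (fun c => ~~ isother c) t in (0 < k) && (nth g t k == linv g))
  | [::] => false
  end.

Definition trivial_count (g : letter) (isother : letter -> bool) (w : seq letter) : nat :=
  count (fun i => trivial_at g isother (rot i w)) (iota 0 (size w)).

(* For sigma^{+-1}: trivial cancellation comes from subwords x y^r x^-1;
   for tau^{+-1}: from subwords y x^r y^-1.  No proper cancellation means all
   cancellation is accounted for by these trivial cancellations (each of which
   cancels exactly one pair of letters). *)
Definition no_proper_cancellation_sigma (f : letter -> seq letter) (w : seq letter) : Prop :=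
  cancelled_pairs f w = trivial_count lx is_yletter w.
Definition no_proper_cancellation_tau (f : letter -> seq letter) (w : seq letter) : Prop :=
  cancelled_pairs f w = trivial_count ly is_xletter w.

(* Chains.  A chain tau^{m_k} sigma^{l_k} ... tau^{m_1} sigma^{l_1} is given by
   the sequence [:: (l_1, m_1); ...; (l_k, m_k)]; the rightmost factor acts first. *)
Definition chain_apply (fs ft : letter -> seq letter) (c : seq (nat * nat))
  (w : seq letter) : seq letter :=
  foldl (fun v lm => iter lm.2 (act ft) (iter lm.1 (act fs) v)) w c.

Definition sum_l (c : seq (nat * nat)) : nat := \sum_(p <- c) p.1.
Definition sum_m (c : seq (nat * nat)) : nat := \sum_(p <- c) p.2.

From mathcomp Require Import all_boot zify.
Set Implicit Arguments. Unset Strict Implicit. Unset Printing Implicit Defensive.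

(* Write [transvection g h] for the automorphism [g |-> g h]; sigma^(+-1) and tau^(+-1) are
   [transvection x y^(+-1)] and [transvection y x^(+-1)].  On a cyclically reduced word it
   cancels at most one pair per adjacency [g . h^-1] or [h . g^-1], so the image is computed
   letter by letter.  Such a cancellation is trivial when it sits in a subword
   [g h^r g^-1] and proper when it sits in [g h^-r g] or [g^-1 h^r g^-1]; call the [h]-letters
   of the latter two kinds of subwords bad.  Applying [transvection g h] removes one [h] from
   every such run, so the number of bad letters drops whenever it is positive, while the other
   transvection of the chain never creates bad letters.  A word [w] has at most [size w] bad
   letters, so after [size w] applications of [transvection g h] there are none left, and then
   every cancellation is trivial. *)

Definition non_inverse (a b : letter) : bool := b != linv a.
Definition of_gen (g a : letter) : bool := (a == g) || (a == linv g).

Lemma linvK : involutive linv. Proof. by case. Qed.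

Lemma eq_linv a b : (a == linv b) = (linv a == b).
Proof. by case: a; case: b. Qed.

Lemma non_inverse_refl : reflexive non_inverse. Proof. by case. Qed.

Lemma reduced_sorted s : reduced s = sorted non_inverse s.
Proof.
elim: s => [|a [|b t] IH] //.
by rewrite -[reduced _]/(non_inverse a b && reduced (b :: t)) IH.
Qed.

Lemma cyc_reduced_cycle s : cyc_reduced s = cycle non_inverse s.
Proof.
case: s => [|a t] //=; rewrite /cyc_reduced reduced_sorted /= rcons_path.
by rewrite /non_inverse eq_linv eq_sym.
Qed.

(** * Sums over the rotations of a word *)

Lemma leq_sumn_map (S : eqType) (r : seq S) (F G : S -> nat) :
  {in r, forall u, F u <= G u} -> sumn (map F r) <= sumn (map G r).
Proof.
elim: r => //= u r IH FG.
by rewrite leq_add ?FG ?mem_head // IH // => w Hw; rewrite FG // inE Hw orbT.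
Qed.

Lemma ltn_sumn_map (S : eqType) (r : seq S) (F G : S -> nat) : {in r, forall u, F u <= G u} ->
  (exists2 u, u \in r & F u < G u) -> sumn (map F r) < sumn (map G r).
Proof.
elim: r => [|u r IH] FG [w] //=.
have FGr : {in r, forall w, F w <= G w} by move=> x Hx; rewrite FG // inE Hx orbT.
rewrite inE => /orP [/eqP -> lt_w|r_w lt_w].
  by rewrite -addSn leq_add // leq_sumn_map.
by rewrite -addnS leq_add ?FG ?mem_head // IH //; exists w.
Qed.

Section Rotations.

Variable T : eqType.
Implicit Types (s : seq T) (F G : seq T -> nat).

Definition rots s := [seq rot i s | i <- iota 0 (size s)].

Definition rsum F s := sumn (map F (rots s)).

Lemma size_rots s : size (rots s) = size s.
Proof. by rewrite size_map size_iota. Qed.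

Lemma rots_rot1 s : map (rot 1) (rots s) = rot 1 (rots s).
Proof.
case: s => [|a t] //; set s := a :: t; rewrite /rots [size s]/= [in RHS]/= rot1_cons.
rewrite -[(size t).+1]addn1 iotaD !map_cat -!map_comp -cats1 /= add0n.
rewrite -rotS // rot_oversize // rot0 (iotaDl 1 0) -map_comp; congr (_ ++ _).
apply/eq_in_map => i; rewrite mem_iota add0n => /andP [_ Hi] /=.
by rewrite add1n -rotS //; exact: ltnW.
Qed.

Lemma mem_rots i s : i < size s -> rot i s \in rots s.
Proof. by move=> Hi; apply/mapP; exists i; rewrite // mem_iota. Qed.

Lemma size_in_rots s u : u \in rots s -> size u = size s.
Proof. by case/mapP=> i _ ->; rewrite size_rot. Qed.

Lemma cycle_in_rots (e : rel T) s u : u \in rots s -> cycle e u = cycle e s.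
Proof. by case/mapP=> i _ ->; rewrite rot_cycle. Qed.

Lemma rot_in_rots n s u : u \in rots s -> rot n u \in rots s.
Proof.
case/mapP=> i Hi ->; rewrite rot_rot_add; case: (ltngtP (rot_add s i n) (size s)).
- exact: mem_rots.
- by move=> Hgt; move: (leq_rot_add i n s); rewrite leqNgt Hgt.
move=> ->; rewrite rot_size; case: s Hi => [|a t] // _.
by rewrite -{1}(rot0 (a :: t)) mem_rots.
Qed.

Lemma rsum_rot1 F s : rsum (F \o rot 1) s = rsum F s.
Proof. by rewrite /rsum map_comp rots_rot1 map_rot sumn_rot. Qed.

Lemma rsumD F G s : rsum (fun u => F u + G u) s = rsum F s + rsum G s.
Proof. by rewrite /rsum; elim: (rots s) => //= u r ->; rewrite addnACA. Qed.

Lemma eq_rsum F G s : {in rots s, F =1 G} -> rsum F s = rsum G s.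
Proof. by move=> /eq_in_map FG; rewrite /rsum FG. Qed.

Lemma nth0_rot x0 s i : i < size s -> nth x0 (rot i s) 0 = nth x0 s i.
Proof. by move=> Hi; rewrite /rot nth_cat size_drop subn_gt0 Hi nth_drop addn0. Qed.

Lemma rots_flatten_cat (bs : seq (seq T)) r :
  [seq rot j (flatten bs ++ r) | j <- iota 0 (size (flatten bs))] =
  flatten [seq [seq rot j (flatten (drop i bs) ++ r ++ flatten (take i bs))
               | j <- iota 0 (size (nth [::] bs i))] | i <- iota 0 (size bs)].
Proof.
elim: bs r => [|b bs IH] r //=.
rewrite size_cat iotaD map_cat add0n -(addn0 (size b)) iotaDl -map_comp.
rewrite addn0 cats0; congr (_ ++ _).
have -> : iota 1 (size bs) = map succn (iota 0 (size bs)) by exact: (iotaDl 1 0).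
rewrite -map_comp.
transitivity [seq rot i (flatten bs ++ (r ++ b)) | i <- iota 0 (size (flatten bs))].
  apply/eq_in_map => j; rewrite mem_iota add0n => /andP [_ Hj] /=.
  rewrite addnC rotD; last by rewrite !size_cat; lia.
  by rewrite -catA rot_size_cat -catA.
by rewrite IH; congr flatten; apply: eq_map => i /=; rewrite !catA.
Qed.

Lemma rots_flatten (bs : seq (seq T)) :
  rots (flatten bs) =
  flatten [seq [seq rot j (flatten (rot i bs)) | j <- iota 0 (size (nth [::] bs i))]
          | i <- iota 0 (size bs)].
Proof.
rewrite /rots; have := rots_flatten_cat bs [::]; rewrite cats0 => ->; congr flatten.
by apply: eq_map => i; rewrite /rot flatten_cat.
Qed.

Lemma cycle_rots_head (e : rel T) x0 s :
  {in rots s, forall u, e (head x0 u) (head x0 (rot 1 u))} -> cycle e s.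
Proof.
case: s => [|a t] // H; apply/(pathP x0) => i; rewrite size_rcons => Hi.
have /H := @mem_rots i (a :: t) Hi.
rewrite -rotS // -!nth0 nth0_rot // -[a :: rcons t a]/(rcons (a :: t) a) nth_rcons /= Hi.
case: (ltnP i.+1 (size t).+1) => Hi1; first by rewrite nth0_rot // nth_rcons -ltnS Hi1.
have -> : i = size t by apply/eqP; rewrite eqn_leq -ltnS Hi -ltnS Hi1.
by rewrite rot_oversize // nth_rcons ltnn eqxx.
Qed.

End Rotations.

(** * The image of a cyclic word under a transvection *)

Definition admissible (g h : letter) : bool :=
  (g == lx) && is_yletter h || (g == ly) && is_xletter h.

Definition transvection (g h a : letter) : seq letter :=
  if a == g then [:: g; h] else if a == linv g then [:: linv h; linv g] else [:: a].

(* The image of [a], between the letters [p] and [n] ([None] at the ends of a linear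
   word), after the cancellations [g h . h^-1] and [h . h^-1 g^-1] with its neighbours. *)
Definition block (g h : letter) (p : option letter) (a : letter) (n : option letter) :=
  if a == g then (if n == Some (linv h) then [:: g] else [:: g; h])
  else if a == linv g then (if p == Some h then [:: linv g] else [:: linv h; linv g])
  else if a == linv h then (if p == Some g then [::] else [:: a])
  else if a == h then (if n == Some (linv g) then [::] else [:: a])
  else [:: a].

Fixpoint blocks g h (p q : option letter) (v : seq letter) : seq (seq letter) :=
  if v is a :: t then
    block g h p a (if t is b :: _ then Some b else q) :: blocks g h (Some a) q t
  else [::].

Definition cyc_blocks g h v := blocks g h (Some (last lx v)) (Some (head lx v)) v.
Definition cyc_image g h v := flatten (cyc_blocks g h v).

Definition head_block g h u :=
  block g h (Some (last lx u)) (head lx u) (Some (head lx (rot 1 u))).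
Definition tail_image g h u := flatten (behead (cyc_blocks g h u)).

Section Blocks.

Variables g h : letter.

Lemma blocks_rcons p q s a :
  blocks g h p q (rcons s a) =
  rcons (blocks g h p (Some a) s) (block g h (last p (map Some s)) a q).
Proof. by elim: s p => [|b s IH] p //=; rewrite IH; case: s {IH}. Qed.

Lemma size_blocks p q v : size (blocks g h p q v) = size v.
Proof. by elim: v p => [|a t IH] p //=; rewrite IH. Qed.

Lemma last_map_Some (s : seq letter) a : last (Some a) (map Some s) = Some (last a s).
Proof. by elim: s a => [|b s IH] a //=. Qed.

Lemma cyc_blocks_cons a t :
  cyc_blocks g h (a :: t) = head_block g h (a :: t) :: behead (cyc_blocks g h (a :: t)).
Proof. by rewrite /cyc_blocks /head_block rot1_cons /=; case: t. Qed.

Lemma cyc_blocks_rot1 v : cyc_blocks g h (rot 1 v) = rot 1 (cyc_blocks g h v).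
Proof.
case: v => [|a [|b t]] //.
rewrite rot1_cons /cyc_blocks /= rot1_cons blocks_rcons /= last_map_Some.
by rewrite last_rcons; case: t.
Qed.

Lemma cyc_blocks_rot i v : cyc_blocks g h (rot i v) = rot i (cyc_blocks g h v).
Proof.
elim: i => [|i IH]; first by rewrite !rot0.
case: (ltnP i (size v)) => Hi; last by rewrite !rot_oversize // ?size_blocks; exact: leqW.
by rewrite (rotS Hi) (@rotS _ i (cyc_blocks g h v)) ?size_blocks // cyc_blocks_rot1 IH.
Qed.

Lemma cyc_image_cons a t :
  cyc_image g h (a :: t) = head_block g h (a :: t) ++ tail_image g h (a :: t).
Proof. by rewrite /cyc_image /tail_image cyc_blocks_cons. Qed.

Lemma cyc_image_rot1 u : u != [::] ->
  cyc_image g h (rot 1 u) = tail_image g h u ++ head_block g h u.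
Proof.
case: u => [|a t] // _.
by rewrite /cyc_image cyc_blocks_rot1 /tail_image cyc_blocks_cons rot1_cons flatten_rcons.
Qed.

Lemma nth_cyc_blocks v i : i < size v ->
  nth [::] (cyc_blocks g h v) i = head_block g h (rot i v).
Proof.
move=> Hi; rewrite -nth0_rot ?size_blocks // -cyc_blocks_rot.
case E: (rot i v) => [|a t]; first by move: Hi; rewrite -(size_rot i v) E.
by rewrite cyc_blocks_cons.
Qed.

Definition head_rots u := [seq rot j (cyc_image g h u) | j <- iota 0 (size (head_block g h u))].

Lemma rots_cyc_image v : rots (cyc_image g h v) = flatten [seq head_rots u | u <- rots v].
Proof.
rewrite /cyc_image rots_flatten size_blocks -map_comp; congr flatten; apply/eq_in_map => i.
rewrite mem_iota add0n => /andP [_ Hi].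
by rewrite /= /head_rots nth_cyc_blocks // -cyc_blocks_rot.
Qed.

End Blocks.

Lemma cycle_head_rot1 u : cycle non_inverse u -> non_inverse (head lx u) (head lx (rot 1 u)).
Proof.
case: u => [|a [|b t]] // Hu; first exact: non_inverse_refl.
by rewrite rot1_cons; case/andP: Hu.
Qed.

Lemma cycle_last_head u : cycle non_inverse u -> non_inverse (last lx u) (head lx u).
Proof. by case: u => [|a t] //=; rewrite rcons_path => /andP []. Qed.

Lemma last_rot1 (u : seq letter) : last lx (rot 1 u) = head lx u.
Proof. by case: u => [|a t] //; rewrite rot1_cons last_rcons. Qed.

Definition cletter (k : nat) (u : seq letter) := head lx (iter k (rot 1) u).

Lemma cycle_cletter u k : cycle non_inverse u -> non_inverse (cletter k u) (cletter k.+1 u).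
Proof. by move=> Hu; apply: cycle_head_rot1; elim: k => //= k IH; rewrite rot_cycle. Qed.

Lemma strip_ends_cons_rcons k a s : strip_ends k.+1 (a :: rcons s (linv a)) = strip_ends k s.
Proof. by rewrite /= last_rcons eqxx andbT belast_rcons; case: s. Qed.

Lemma strip_ends_cycle k s : cycle non_inverse s -> strip_ends k s = s.
Proof.
case: k s => [|k] [|a t] // /cycle_last_head.
by rewrite /non_inverse eq_linv eq_sym /= => /negbTE ->; rewrite andbF.
Qed.

Lemma head_rotr1 (u : seq letter) : head lx (rotr 1 u) = last lx u.
Proof. by case/lastP: u => [|s x] //; rewrite rotr1_rcons last_rcons. Qed.

Definition cancel_pair (g h a b : letter) : bool :=
  (a == g) && (b == linv h) || (a == h) && (b == linv g).

Section CyclicImage.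

Variables g h : letter.
Hypothesis gh : admissible g h.

Lemma head_block_rot1 u :
  head_block g h (rot 1 u) = block g h (Some (head lx u)) (cletter 1 u) (Some (cletter 2 u)).
Proof. by rewrite /head_block last_rot1. Qed.

Lemma block_pair_neq_nil p a b c : non_inverse p a -> non_inverse a b -> non_inverse b c ->
  block g h (Some p) a (Some b) ++ block g h (Some a) b (Some c) != [::].
Proof.
by move: gh; case: g h => [] [] // _; case: p; case: a => //; case: b => //; case: c.
Qed.

Lemma head_cyc_image u : cycle non_inverse u -> u != [::] ->
  head_block g h u ++ head_block g h (rot 1 u) != [::] /\
  head lx (cyc_image g h u) = head lx (head_block g h u ++ head_block g h (rot 1 u)).
Proof.
move=> Hu u_ne; have u1_ne : rot 1 u != [::] by rewrite -size_eq0 size_rot size_eq0.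
have NE : head_block g h u ++ head_block g h (rot 1 u) != [::].
  rewrite head_block_rot1; apply: block_pair_neq_nil.
  - exact: cycle_last_head.
  - exact: (cycle_cletter 0 Hu).
  - exact: (cycle_cletter 1 Hu).
split=> //; case: u Hu u_ne u1_ne NE => [|a t] // Hu _ u1_ne NE.
rewrite cyc_image_cons; case E: (head_block g h (a :: t)) => [|z zs] //=.
have := @cyc_image_rot1 g h (a :: t) isT; rewrite E cats0 => <-.
case: (rot 1 (a :: t)) u1_ne NE => [|b t'] // _; rewrite E cyc_image_cons /=.
by case: (head_block _ _ _).
Qed.

Lemma block_letters_non_inverse p a b c d :
  non_inverse p a -> non_inverse a b -> non_inverse b c -> non_inverse c d ->
  let B := block g h (Some p) a (Some b) in
  all (fun j => non_inverse (nth lx B j) (if j.+1 < size B then nth lx B j.+1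
         else head lx (block g h (Some a) b (Some c) ++ block g h (Some b) c (Some d))))
      (iota 0 (size B)).
Proof.
move: gh; case: g h => [] [] // _;
  by case: p; case: a => //; case: b => //; case: c => //; case: d.
Qed.

Lemma cyc_image_head_block u : u != [::] ->
  cyc_image g h u = head_block g h u ++ tail_image g h u.
Proof. by case: u => [|a t] // _; rewrite cyc_image_cons. Qed.

Lemma next_in_cyc_image u j : cycle non_inverse u -> u != [::] -> j < size (head_block g h u) ->
  head lx (rot 1 (rot j (cyc_image g h u))) =
  if j.+1 < size (head_block g h u) then nth lx (head_block g h u) j.+1
  else head lx (block g h (Some (cletter 0 u)) (cletter 1 u) (Some (cletter 2 u)) ++
                block g h (Some (cletter 1 u)) (cletter 2 u) (Some (cletter 3 u))).
Proof.
move=> Hu u_ne Hj; have EC := cyc_image_head_block u_ne.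
have HjC : j < size (cyc_image g h u) by rewrite EC size_cat ltn_addr.
rewrite -rotS // -nth0; case: ifP => Hj1.
  by rewrite nth0_rot EC ?nth_cat ?Hj1 // size_cat ltn_addr.
have -> : j.+1 = size (head_block g h u) by apply/eqP; rewrite eqn_leq Hj leqNgt Hj1.
have u1_ne : rot 1 u != [::] by rewrite -size_eq0 size_rot size_eq0.
rewrite EC rot_size_cat -cyc_image_rot1 // nth0.
have Hu1 : cycle non_inverse (rot 1 u) by rewrite rot_cycle.
have [_ ->] := head_cyc_image Hu1 u1_ne.
by rewrite !head_block_rot1.
Qed.

Lemma cycle_cyc_image v : cycle non_inverse v -> cycle non_inverse (cyc_image g h v).
Proof.
move=> Hv; apply: (@cycle_rots_head _ _ lx) => r.
rewrite rots_cyc_image => /flattenP [_ /mapP [u u_in ->]].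
have Hu : cycle non_inverse u by rewrite (cycle_in_rots _ u_in).
have u_ne : u != [::] by rewrite -size_eq0 (size_in_rots u_in) size_eq0; case: (v) u_in.
case/mapP => j; rewrite mem_iota add0n => /andP [_ Hj] ->.
rewrite next_in_cyc_image // -nth0 nth0_rot; last first.
  by rewrite (cyc_image_head_block u_ne) size_cat ltn_addr.
rewrite (cyc_image_head_block u_ne) nth_cat Hj.
have := block_letters_non_inverse (cycle_last_head Hu) (cycle_cletter 0 Hu)
          (cycle_cletter 1 Hu) (cycle_cletter 2 Hu).
by move=> /allP /(_ j); rewrite mem_iota add0n Hj; apply.
Qed.

Lemma free_reduce_subst a t : sorted non_inverse (a :: t) ->
  free_reduce (subst (transvection g h) (a :: t)) = flatten (blocks g h None None (a :: t)).
Proof.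
elim: t a => [|b t IH] a; first by move: gh; case: g h => [] [] // _; case: a.
rewrite [sorted _ _]/= => /andP [Rab Hs].
rewrite -[free_reduce _]/(foldr _ _ (transvection g h a ++ subst _ (b :: t))) foldr_cat.
rewrite -[foldr _ _ (subst _ _)]/(free_reduce _) IH //.
case: t {IH} Hs => [|c [|d t']] /=.
- by move=> _; move: gh Rab; case: g h => [] [] // _; case: a; case: b.
- by rewrite andbT; move: gh Rab; case: g h => [] [] // _; case: a; case: b => //; case: c.
case/and3P => Rbc Rcd _; move: (flatten _) => W.
move: gh Rab Rbc Rcd; case: g h => [] [] // _;
  by case: a; case: b => //; case: c => //; case: d.
Qed.

Lemma block_no_cancel l a p n : ~~ cancel_pair g h l a ->
  block g h (Some l) a n = block g h None a n /\ block g h p l (Some a) = block g h p l None.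
Proof. by move: gh; case: g h => [] [] // _; case: l; case: a. Qed.

Lemma flatten_blocks_cons_rcons p q a m l :
  flatten (blocks g h p q (a :: rcons m l)) =
  block g h p a (Some (head l m)) ++ flatten (blocks g h (Some a) (Some l) m) ++
  block g h (Some (last a m)) l q.
Proof.
have -> : blocks g h p q (a :: rcons m l) =
    block g h p a (Some (head l m)) :: blocks g h (Some a) q (rcons m l) by case: m.
by rewrite /= blocks_rcons flatten_rcons last_map_Some catA.
Qed.

Lemma strip_ends_image a l b z M :
  cycle non_inverse (block g h (Some l) a (Some b) ++ M ++ block g h (Some z) l (Some a)) ->
  let L := block g h None a (Some b) ++ M ++ block g h (Some z) l None in
  strip_ends (size L) L = block g h (Some l) a (Some b) ++ M ++ block g h (Some z) l (Some a).
Proof.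
move=> HC L; rewrite /L; case Hc: (cancel_pair g h l a); last first.
  by have [<- <-] := block_no_cancel (Some z) (Some b) (negbT Hc); rewrite strip_ends_cycle.
case/orP: Hc HC => /andP [/eqP -> /eqP ->].
  have [-> -> -> ->] : [/\ block g h None (linv h) (Some b) = [:: linv h],
      block g h (Some z) g None = [:: g; h], block g h (Some g) (linv h) (Some b) = [::]
      & block g h (Some z) g (Some (linv h)) = [:: g]] by move: gh; case: g h => [] [] //.
  have -> : [:: linv h] ++ M ++ [:: g; h] = linv h :: rcons (M ++ [:: g]) (linv (linv h)).
    by rewrite linvK -cats1 -catA.
  by rewrite cat0s => HC; rewrite [size _]/= strip_ends_cons_rcons strip_ends_cycle.
have [-> -> -> ->] : [/\ block g h None (linv g) (Some b) = [:: linv h; linv g],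
    block g h (Some z) h None = [:: h], block g h (Some h) (linv g) (Some b) = [:: linv g]
    & block g h (Some z) h (Some (linv g)) = [::]] by move: gh; case: g h => [] [] //.
have -> : [:: linv h; linv g] ++ M ++ [:: h] = linv h :: rcons (linv g :: M) (linv (linv h)).
  by rewrite linvK -cats1.
by rewrite cats0 => HC; rewrite [size _]/= strip_ends_cons_rcons strip_ends_cycle.
Qed.

Lemma act_transvection v : cycle non_inverse v -> act (transvection g h) v = cyc_image g h v.
Proof.
case: v => [|a t] // Hv; have HC := cycle_cyc_image Hv.
have Hs : sorted non_inverse (a :: t) by move: Hv; rewrite /= rcons_path => /andP [].
rewrite /act /cyc_reduce free_reduce_subst //.
case/lastP: t Hv Hs HC => [|m l] Hv Hs HC.
  rewrite /cyc_image /cyc_blocks /=; clear Hv Hs HC.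
  by move: gh; case: g h => [] [] // _; case: a.
move: HC; rewrite /cyc_image /cyc_blocks [last lx _]/= last_rcons [head lx _]/=.
rewrite !flatten_blocks_cons_rcons; exact: strip_ends_image.
Qed.

End CyclicImage.

(** * Bad letters *)

Definition bad_pair (g h c a : letter) : bool :=
  (c == g) && (a == linv h) || (c == linv g) && (a == h).

(* Reading [t] cyclically from [a], the first and last [g]-letters of [t] are the nearest
   ones after and before [a]: [a :: t] is bad when [a] lies in a subword [g h^-r g] or
   [g^-1 h^r g^-1]. *)
Definition bad_at (g h : letter) (u : seq letter) : bool :=
  if u is a :: t then
    of_gen h a && (let xs := filter (of_gen g) t in
                   (xs != [::]) && (head lx xs == last lx xs) && bad_pair g h (head lx xs) a)
  else false.
Arguments bad_at : simpl never.

Definition bad_count g h v := count (bad_at g h) (rots v).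

Lemma bad_count_cyc_image g h g' h' v :
  bad_count g h (cyc_image g' h' v) = rsum (fun u => count (bad_at g h) (head_rots g' h' u)) v.
Proof. by rewrite /bad_count rots_cyc_image count_flatten -map_comp. Qed.

Lemma bad_count_le_size g h v : bad_count g h v <= size v.
Proof. by rewrite -(size_rots v) count_size. Qed.

Lemma of_gen_id g : of_gen g g. Proof. by rewrite /of_gen eqxx. Qed.
Lemma of_gen_linv g : of_gen g (linv g). Proof. by rewrite /of_gen eqxx orbT. Qed.

Lemma bad_at_filter g h a t t' : filter (of_gen g) t = filter (of_gen g) t' ->
  bad_at g h (a :: t) = bad_at g h (a :: t').
Proof. by rewrite /bad_at /= => ->. Qed.

Lemma bad_at_of_gen g h a t : of_gen h a = false -> bad_at g h (a :: t) = false.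
Proof. by rewrite /bad_at /= => ->. Qed.

Lemma bad_atP g h a t : bad_at g h (a :: t) ->
  [/\ of_gen h a, filter (of_gen g) t != [::],
      head lx (filter (of_gen g) t) = last lx (filter (of_gen g) t) &
      bad_pair g h (head lx (filter (of_gen g) t)) a].
Proof. by rewrite /bad_at /= => /andP [-> /andP [/andP [-> /eqP ->] ->]]; split. Qed.

Lemma not_bad_at_head g h a c t :
  of_gen g c -> ~~ bad_pair g h c a -> ~~ bad_at g h (a :: c :: t).
Proof. by move=> Hc Hb; rewrite /bad_at /= Hc /= (negbTE Hb) !andbF. Qed.

Lemma not_bad_at_last g h a c t :
  of_gen g c -> ~~ bad_pair g h c a -> ~~ bad_at g h (a :: rcons t c).
Proof.
move=> Hc Hb; rewrite /bad_at /= filter_rcons Hc last_rcons.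
by case: (_ == c) / eqP => [->|]; rewrite ?(negbTE Hb) !andbF.
Qed.

Lemma bad_at_local g h a t : t != [::] -> of_gen g (head lx t) -> of_gen g (last lx t) ->
  head lx t = last lx t -> bad_pair g h (head lx t) a -> of_gen h a -> bad_at g h (a :: t).
Proof.
case: t => [|y t] // _ /= Hy Hz Ey Hbp Ha; rewrite /bad_at /= Ha Hy /=.
case/lastP: t Hz Ey => [|s z] /=; first by move=> _ _; rewrite eqxx Hbp.
by rewrite last_rcons => Hz Ey; rewrite filter_rcons Hz /= last_rcons Ey eqxx /= -Ey Hbp.
Qed.

Lemma not_bad_at_flank_left g h a z t : of_gen g z -> of_gen g a = false -> last a t = z ->
  ~~ bad_pair g h z a -> ~~ bad_at g h (a :: t).
Proof.
move=> Hz Ha; case/lastP: t => [/= Ez|t y]; first by move: Hz; rewrite -Ez Ha.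
by rewrite last_rcons => Ez; subst z; apply: not_bad_at_last.
Qed.

Lemma not_bad_at_flank_right g h a z t : of_gen g z -> of_gen g a = false ->
  head lx (t ++ [:: a]) = z -> ~~ bad_pair g h z a -> ~~ bad_at g h (a :: t).
Proof.
move=> Hz Ha; case: t => [/= Ez|y t /= Ez]; first by move: Hz; rewrite -Ez Ha.
by subst z; apply: not_bad_at_head.
Qed.

Lemma not_bad_at_flanks_differ g h a zl zr t :
  of_gen g zl -> of_gen g zr -> of_gen g a = false ->
  last a t = zl -> head lx (t ++ [:: a]) = zr -> zl != zr -> ~~ bad_at g h (a :: t).
Proof.
move=> Hl Hr Ha; case: t => [/= Ez|y t /= El Er]; first by move: Hl; rewrite -Ez Ha.
subst y; case/lastP: t El => [/= -> | t y]; first by rewrite eqxx.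
rewrite last_rcons => -> Hne; rewrite /bad_at /= Hr /= filter_rcons Hl /= last_rcons.
by rewrite eq_sym (negbTE Hne) !andbF.
Qed.

Section Admissible.

Variables g h : letter.
Hypothesis gh : admissible g h.

Lemma of_gen_h_g a : of_gen h a -> of_gen g a = false.
Proof. by move: gh; case: g h => [] [] // _; case: a. Qed.

Lemma of_gen_g_h a : of_gen g a -> of_gen h a = false.
Proof. by move: gh; case: g h => [] [] // _; case: a. Qed.

Lemma filter_block p a n : filter (of_gen g) (block g h p a n) = filter (of_gen g) [:: a].
Proof. by rewrite /block; move: gh; case: g h => [] [] // _; case: a => /=; do ?case: ifP. Qed.

Lemma filter_blocks p q v :
  filter (of_gen g) (flatten (blocks g h p q v)) = filter (of_gen g) v.
Proof.
elim: v p => [|a t IH] p //=.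
by rewrite filter_cat IH filter_block /=; case: ifP.
Qed.

Lemma filter_cyc_image v : filter (of_gen g) (cyc_image g h v) = filter (of_gen g) v.
Proof. exact: filter_blocks. Qed.

Lemma head_block_shapes a t : let B := head_block g h (a :: t) in
  [\/ B = [::], B = [:: a], B = [:: g; h] /\ a = g | B = [:: linv h; linv g] /\ a = linv g].
Proof.
rewrite /head_block /block; move: gh; case: g h => [] [] // _; case: a => /=;
  do ?case: ifP => _; first [by apply: Or41 | by apply: Or42 | by apply: Or43 | by apply: Or44].
Qed.

Lemma count_bad_head_rots u : count (bad_at g h) (head_rots g h u) <= bad_at g h u.
Proof.
case: u => [|a t]; first by rewrite /head_rots; elim: (iota _ _).
rewrite /head_rots cyc_image_cons.
case: (head_block_shapes a t) => [-> | E | [-> ->] | [-> ->]] //=; rewrite ?E /= rot0 ?addn0.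
- case Ha: (of_gen h a); last by rewrite !bad_at_of_gen.
  rewrite (@bad_at_filter g h a _ t) //; have := filter_cyc_image (a :: t).
  by rewrite cyc_image_cons E /=; move: (of_gen_h_g Ha) => ->.
- rewrite bad_at_of_gen ?rot1_cons /=; last by rewrite of_gen_g_h ?of_gen_id.
  rewrite -rcons_cons (negbTE (not_bad_at_last _ (of_gen_id g) _)) //.
  by move: gh; case: g h => [] [].
- rewrite (negbTE (not_bad_at_head _ (of_gen_linv g) _)) //=; last first.
    by move: gh; case: g h => [] [].
  by rewrite rot1_cons rcons_cons bad_at_of_gen // of_gen_g_h ?of_gen_linv.
Qed.

Lemma non_inverse_h_letters a c :
  of_gen g a = false -> of_gen g c = false -> non_inverse a c -> c = a.
Proof. by move: gh; case: g h => [] [] // _; case: c; case: a. Qed.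

Lemma bad_pair_h c : bad_pair g h c h = (c == linv g).
Proof. by move: gh; case: g h => [] [] // _; case: c. Qed.

Lemma bad_pair_linv_h c : bad_pair g h c (linv h) = (c == g).
Proof. by move: gh; case: g h => [] [] // _; case: c. Qed.

Lemma bad_run_right d t : cycle non_inverse (h :: t) -> bad_at g h (h :: t) ->
  find (of_gen g) t = d ->
  exists k, bad_at g h (rot k (h :: t)) /\ head_block g h (rot k (h :: t)) = [::].
Proof.
elim: d t => [|d IH] t Hc Hb Hf; have [_ Hne Hhl Hbp] := bad_atP Hb.
  exists 0; rewrite rot0; split=> //; case: t Hc Hb Hf Hne Hhl Hbp => [|c t'] //= _ _.
  case Hgc: (of_gen g c) => // _ _ _ /=; rewrite bad_pair_h => /eqP ->.
  by rewrite /head_block rot1_cons /=; move: gh; case: g h => [] [].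
case: t Hc Hb Hf Hne Hhl Hbp => [|c t'] //= Hc Hb.
case Hgc: (of_gen g c) => //= -[Hf] Hne _ _.
have Ec : c = h.
  by apply: non_inverse_h_letters => //; [apply: of_gen_h_g; apply: of_gen_id | case/andP: Hc].
subst c; have [k [Hk1 Hk2]] : exists k, bad_at g h (rot k (h :: rcons t' h)) /\
                                  head_block g h (rot k (h :: rcons t' h)) = [::].
  apply: IH => //; first by rewrite -rcons_cons -rot1_cons rot_cycle.
  - by rewrite (@bad_at_filter g h h _ (h :: t')) // filter_rcons Hgc /= Hgc.
  - by rewrite -cats1 find_cat has_filter Hne Hf.
by exists (rot_add [:: h, h & t'] 1 k); rewrite -rot_rot_add rot1_cons.
Qed.

Lemma bad_run_left d t : cycle non_inverse (linv h :: t) -> bad_at g h (linv h :: t) ->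
  find (of_gen g) (rev t) = d ->
  exists k, bad_at g h (rot k (linv h :: t)) /\ head_block g h (rot k (linv h :: t)) = [::].
Proof.
have Hgh : of_gen g (linv h) = false by apply: of_gen_h_g; apply: of_gen_linv.
elim: d t => [|d IH] t Hc Hb Hf; have [_ Hne Hhl Hbp] := bad_atP Hb.
  exists 0; rewrite rot0; split=> //; case/lastP: t Hc Hb Hf Hne Hhl Hbp => [|t' c] // _ _.
  rewrite rev_rcons /=; case Hgc: (of_gen g c) => // _ _.
  rewrite filter_rcons Hgc last_rcons => -> /=; rewrite bad_pair_linv_h => /eqP ->.
  by rewrite /head_block /= last_rcons; move: gh; case: g h => [] [].
case/lastP: t Hc Hb Hf Hne Hhl Hbp => [|t' c] // Hc Hb.
rewrite rev_rcons /=; case Hgc: (of_gen g c) => //= -[Hf]; rewrite filter_rcons Hgc => Hne _ _.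
have Ec : linv h = c.
  apply: non_inverse_h_letters => //.
  by move: Hc; rewrite /= rcons_path last_rcons => /andP [_].
subst c; have [k [Hk1 Hk2]] : exists k, bad_at g h (rot k [:: linv h, linv h & t']) /\
                                  head_block g h (rot k [:: linv h, linv h & t']) = [::].
  apply: IH.
  - by rewrite -(rotr1_rcons (linv h) (linv h :: t')) rotr_cycle.
  - by rewrite (@bad_at_filter g h _ _ (rcons t' (linv h))) // filter_rcons /= Hgh.
  - by rewrite rev_cons -cats1 find_cat has_rev has_filter Hne -Hf.
have Er : rot (size t').+1 (linv h :: rcons t' (linv h)) = [:: linv h, linv h & t'].
  by rewrite -(rotr1_rcons (linv h) (linv h :: t')) /rotr size_rcons subn1.
by exists (rot_add (linv h :: rcons t' (linv h)) (size t').+1 k); rewrite -rot_rot_add Er.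
Qed.

Lemma bad_run_end v u : cycle non_inverse v -> u \in rots v -> bad_at g h u ->
  exists2 u', u' \in rots v & bad_at g h u' /\ head_block g h u' = [::].
Proof.
move=> Hv u_in Hb; have Hu : cycle non_inverse u by rewrite (cycle_in_rots _ u_in).
have [k [Hk1 Hk2]] : exists k, bad_at g h (rot k u) /\ head_block g h (rot k u) = [::].
  case: u {u_in} Hu Hb => [|a t] // Hu Hb; have [Ha _ _ _] := bad_atP Hb.
  by case/orP: Ha => /eqP Ea; subst a; [apply: (bad_run_right Hu Hb erefl)
                                         | apply: (bad_run_left Hu Hb erefl)].
by exists (rot k u); [apply: rot_in_rots | split].
Qed.

Lemma bad_count_own_image v : cycle non_inverse v ->
  bad_count g h (cyc_image g h v) <= (bad_count g h v).-1.
Proof.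
move=> Hv; rewrite bad_count_cyc_image.
have Hle : {in rots v, forall u, count (bad_at g h) (head_rots g h u) <= bad_at g h u}.
  by move=> u _; apply: count_bad_head_rots.
case: (posnP (bad_count g h v)) => [bad0 | bad_pos].
  by have := leq_sumn_map Hle; rewrite sumn_count -/(bad_count g h v) bad0.
rewrite -ltnS prednK // /bad_count -sumn_count; apply: ltn_sumn_map => //.
move: bad_pos; rewrite -has_count => /hasP [u u_in Hb].
have [u' u'_in [Hb' Hbl']] := bad_run_end Hv u_in Hb.
by exists u' => //; rewrite /head_rots Hbl' Hb'.
Qed.

End Admissible.

(* The two transvections of one chain, (sigma, tau) or (sigma^-1, tau^-1), in either order. *)
Definition dual_pair (g h g' h' : letter) : bool :=
  [|| [&& g == lx, h == ly, g' == ly & h' == lx], [&& g == ly, h == lx, g' == lx & h' == ly],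
      [&& g == lx, h == lY, g' == ly & h' == lX] | [&& g == ly, h == lX, g' == lx & h' == lY]].

Section Dual.

Variables g h g' h' : letter.
Hypothesis dual : dual_pair g h g' h'.

Lemma dual_admissible : admissible g h /\ admissible g' h'.
Proof. by move: dual; case: g h g' h' => [] [] [] []. Qed.

Lemma of_gen_dual a : of_gen h' a = of_gen g a /\ of_gen g' a = of_gen h a.
Proof. by move: dual; case: g h g' h' => [] [] [] [] // _; case: a. Qed.

Lemma bad_pair_dual : bad_pair g h h' g' = false /\ bad_pair g h (linv h') (linv g') = false.
Proof. by move: dual; case: g h g' h' => [] [] [] []. Qed.

Lemma dual_block_flanks q p a b c :
  non_inverse q p -> non_inverse p a -> non_inverse a b -> non_inverse b c -> of_gen h a ->
  block g' h' (Some p) a (Some b) = [:: a] ->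
  let L := block g' h' (Some q) p (Some a) in let R := block g' h' (Some a) b (Some c) in
  [|| [&& of_gen g p, p == b & bad_pair g h b a],
      [&& L != [::], of_gen g (last lx L) & ~~ bad_pair g h (last lx L) a],
      [&& R != [::], of_gen g (head lx R) & ~~ bad_pair g h (head lx R) a] |
      [&& L != [::], R != [::], of_gen g (last lx L), of_gen g (head lx R)
        & last lx L != head lx R]].
Proof.
move: dual; case: g h g' h' => [] [] [] [] // _;
  by case: q; case: p => //; case: a => //; case: b => //; case: c.
Qed.

Lemma not_bad_dual_image a t : cycle non_inverse (a :: t) -> of_gen h a ->
  head_block g' h' (a :: t) = [:: a] -> ~~ bad_at g h (a :: t) ->
  ~~ bad_at g h (a :: tail_image g' h' (a :: t)).
Proof.
set u := a :: t => Hu Ha EB Hnb.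
have Hga : of_gen g a = false := of_gen_h_g dual_admissible.1 Ha.
set q := last lx (rotr 1 u); set p := last lx u; set b := cletter 1 u; set c := cletter 2 u.
set L := block g' h' (Some q) p (Some a); set R := block g' h' (Some a) b (Some c).
have ur_ne : rotr 1 u != [::] by rewrite -size_eq0 size_rotr.
have HL : L != [::] -> last a (tail_image g' h' u) = last lx L.
  have EL : head_block g' h' (rotr 1 u) = L by rewrite /head_block head_rotr1 rotrK.
  have := cyc_image_rot1 g' h' ur_ne; rewrite rotrK cyc_image_head_block // EB EL.
  by move=> /(congr1 (last lx)) /= -> L_ne; rewrite last_cat; case: (L) L_ne.
have HR : R != [::] -> head lx (tail_image g' h' u ++ [:: a]) = head lx R.
  have ER : head_block g' h' (rot 1 u) = R by rewrite head_block_rot1.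
  have ur1_ne : rot 1 u != [::] by rewrite -size_eq0 size_rot.
  move=> R_ne; rewrite -EB -cyc_image_rot1 // cyc_image_head_block // ER.
  by case: (R) R_ne.
have Hur : cycle non_inverse (rotr 1 u) by rewrite rotr_cycle.
have := cycle_last_head Hur; rewrite head_rotr1 -/q -/p => Rqp.
have := dual_block_flanks Rqp (cycle_last_head Hu) (cycle_cletter 0 Hu) (cycle_cletter 1 Hu).
move=> /(_ Ha EB).
rewrite -/L -/R; case/or4P.
- case/and3P => Hp /eqP Epb Hbp; case/negP: Hnb.
  have t_ne : t != [::] by move: Hp; rewrite /p /u; case: (t) => //=; rewrite Hga.
  have Eb : head lx t = b by rewrite /b /cletter /u; case: (t) t_ne.
  have Ep : last lx t = p by rewrite /p /u; case: (t) t_ne.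
  by apply: bad_at_local; rewrite ?Eb ?Ep // /b -Epb.
- case/and3P => L_ne HLg HLb; exact: (not_bad_at_flank_left HLg Hga (HL L_ne) HLb).
- case/and3P => R_ne HRg HRb; exact: (not_bad_at_flank_right HRg Hga (HR R_ne) HRb).
case/and5P => L_ne R_ne HLg HRg Hdiff.
exact: (@not_bad_at_flanks_differ g h _ _ _ _ HLg HRg Hga (HL L_ne) (HR R_ne) Hdiff).
Qed.

Lemma count_bad_dual_head_rots u : cycle non_inverse u ->
  count (bad_at g h) (head_rots g' h' u) <= bad_at g h u.
Proof.
have [gh gh'] := dual_admissible; have [bp bpV] := bad_pair_dual.
have gh'1 : of_gen g h' by rewrite -(of_gen_dual h').1 of_gen_id.
have gh'2 : of_gen g (linv h') by rewrite -(of_gen_dual (linv h')).1 of_gen_linv.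
case: u => [|a t] Hu; first by rewrite /head_rots; elim: (iota _ _).
rewrite /head_rots cyc_image_cons.
case: (head_block_shapes gh' a t) => [-> | E | [-> ->] | [-> ->]] //=; rewrite ?E /= rot0 ?addn0.
- case Ha: (of_gen h a); last by rewrite bad_at_of_gen.
  case Hb: (bad_at g h (a :: t)); first exact: leq_b1.
  by rewrite (negbTE (not_bad_dual_image Hu Ha E _)) ?Hb.
- rewrite (negbTE (not_bad_at_head _ gh'1 _)) ?bp //= rot1_cons rcons_cons.
  by rewrite bad_at_of_gen // (of_gen_g_h gh).
- rewrite bad_at_of_gen /=; last by rewrite (of_gen_g_h gh).
  by rewrite rot1_cons rcons_cons (negbTE (not_bad_at_last _ gh'2 _)) ?bpV.
Qed.

Lemma bad_count_dual_image v : cycle non_inverse v ->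
  bad_count g h (cyc_image g' h' v) <= bad_count g h v.
Proof.
move=> Hv; rewrite bad_count_cyc_image /bad_count -sumn_count; apply: leq_sumn_map => u u_in.
by apply: count_bad_dual_head_rots; rewrite (cycle_in_rots _ u_in).
Qed.

End Dual.

(** * Counting cancellations *)

Lemma map_head_rots (v : seq letter) : map (head lx) (rots v) = v.
Proof.
apply: (@eq_from_nth _ lx); first by rewrite size_map size_rots.
move=> i; rewrite size_map size_rots => Hi.
rewrite (nth_map [::]) ?size_rots // /rots (nth_map 0) ?size_iota //.
by rewrite nth_iota // -nth0 nth0_rot.
Qed.

Lemma cyc_blocks_map g h v : cyc_blocks g h v = map (head_block g h) (rots v).
Proof.
apply: (@eq_from_nth _ [::]); first by rewrite size_map size_rots size_blocks.
move=> i; rewrite size_blocks => Hi.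
rewrite (nth_map [::]) ?size_rots // /rots (nth_map 0) ?size_iota //.
by rewrite nth_iota // nth_cyc_blocks.
Qed.

Lemma size_subst f v : size (subst f v) = rsum (fun u => size (f (head lx u))) v.
Proof. by rewrite /subst size_flatten /shape -map_comp -{1}(map_head_rots v) -map_comp. Qed.

Lemma size_cyc_image g h v : size (cyc_image g h v) = rsum (fun u => size (head_block g h u)) v.
Proof. by rewrite /cyc_image size_flatten /shape cyc_blocks_map -map_comp. Qed.

Definition cancel_at g h (u : seq letter) : nat :=
  cancel_pair g h (head lx u) (head lx (rot 1 u)).

Definition cancel_left g h (u : seq letter) : bool :=
  (head lx u == g) && (head lx (rot 1 u) == linv h).
Definition cancel_right g h (u : seq letter) : bool :=
  (head lx u == h) && (head lx (rot 1 u) == linv g).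

Definition trivial_neg g h (u : seq letter) : bool :=
  trivial_at g (of_gen h) u && (head lx (rot 1 u) == linv h).
Definition trivial_pos g h (u : seq letter) : bool :=
  trivial_at g (of_gen h) u && (head lx (rot 1 u) == h).

Definition gens_after g (u : seq letter) := filter (of_gen g) (behead u).

(* [u] starts with one of the [h]s of a subword [g h^r g^-1], r > 0, ... *)
Definition in_pos_run g h (u : seq letter) : bool :=
  [&& head lx u == h, gens_after g u != [::], last lx (gens_after g u) == g
    & head lx (gens_after g u) == linv g].
(* ... here with the last of them. *)
Definition end_pos_run g h (u : seq letter) : bool :=
  [&& head lx u == h, head lx (rot 1 u) == linv g, gens_after g u != [::]
    & last lx (gens_after g u) == g].

Lemma trivial_at_single g P a : trivial_at g P [:: a] = false.
Proof. by rewrite /trivial_at /=; case: (P a); rewrite /= ?andbF. Qed.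

Section Counting.

Variables g h : letter.
Hypothesis gh : admissible g h.

Lemma size_transvection p a b : size (transvection g h a) =
  size (block g h (Some p) a (Some b)) + cancel_pair g h p a + cancel_pair g h a b.
Proof. by move: gh; case: g h => [] [] // _; case: p; case: a; case: b. Qed.

Lemma cancelled_pairs_rsum v : cycle non_inverse v ->
  cancelled_pairs (transvection g h) v = rsum (cancel_at g h) v.
Proof.
move=> Hv; rewrite /cancelled_pairs act_transvection // size_subst size_cyc_image.
pose cancel_wrap u : nat := cancel_pair g h (last lx u) (head lx u).
have -> : rsum (fun u => size (transvection g h (head lx u))) v =
    rsum (fun u => size (head_block g h u)) v + rsum cancel_wrap v + rsum (cancel_at g h) v.
  rewrite -!rsumD; apply: eq_rsum => u _.
  by rewrite (size_transvection (last lx u) _ (head lx (rot 1 u))).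
have -> : rsum cancel_wrap v = rsum (cancel_at g h) v.
  by rewrite -rsum_rot1; apply: eq_rsum => u _; rewrite /= /cancel_wrap last_rot1.
by rewrite -addnA addKn addnn -muln2 mulnK.
Qed.

Lemma trivial_at_cons2 a b t : trivial_at g (of_gen h) [:: a, b & t] =
  [&& a == g, of_gen h b, filter (of_gen g) t != [::] & head lx (filter (of_gen g) t) == linv g].
Proof.
rewrite /trivial_at /=; case: (of_gen h b) => /=; last by rewrite !andbF.
congr (_ && _); elim: t => [|c t IH] /=; first by move: gh; case: g h => [] [].
have -> : ~~ of_gen h c = of_gen g c by move: gh; case: g h => [] [] // _; case: c.
by case: ifP.
Qed.

Lemma trivial_splitE u :
  (trivial_at g (of_gen h) u : nat) = trivial_neg g h u + trivial_pos g h u.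
Proof.
rewrite /trivial_neg /trivial_pos; case: u => [|a [|b t]] //; first by rewrite trivial_at_single.
rewrite trivial_at_cons2 rot1_cons /=.
move: (filter (of_gen g) t != [::]) (head lx (filter (of_gen g) t) == linv g) => X Y.
by move: gh; case: g h => [] [] // _; case: a; case: b; case: X; case: Y.
Qed.

Lemma cancel_splitE u : cancel_at g h u = cancel_left g h u + cancel_right g h u.
Proof.
rewrite /cancel_at /cancel_left /cancel_right /cancel_pair.
by move: gh; case: g h => [] [] // _; case: (head lx u); case: (head lx (rot 1 u)).
Qed.

Lemma trivial_neg_cancel_left u :
  ~~ bad_at g h (rot 1 u) -> trivial_neg g h u = cancel_left g h u.
Proof.
rewrite /trivial_neg /cancel_left; case: u => [|a [|b t]]; first by move: gh; case: g h => [] [].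
  by rewrite trivial_at_single /=; move: gh; case: g h => [] [] // _; case: a.
rewrite trivial_at_cons2 rot1_cons /bad_at /= filter_rcons.
move: (filter_all (of_gen g) t); move: (filter (of_gen g) t) => ys.
move: gh; case: g h => [] [] // _; case: a; case: b => //=.
all: case: ys => [|y ys] //=; rewrite ?last_rcons //.
all: by move: (last y ys) => l; case: y; case: l.
Qed.

Lemma end_pos_run_cancel_right u : ~~ bad_at g h u -> end_pos_run g h u = cancel_right g h u.
Proof.
rewrite /end_pos_run /cancel_right /gens_after.
case: u => [|a [|b t]]; first by move: gh; case: g h => [] [].
  by rewrite /= andbF; move: gh; case: g h => [] [] // _; case: a.
rewrite rot1_cons /bad_at /=.
case: (filter (of_gen g) t) (filter_all (of_gen g) t) => [|y ys] Hall /=.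
  by move: gh; case: g h => [] [] // _; case: a; case: b.
have /andP [Hy _] := Hall; have Hl := allP Hall _ (mem_last y ys); clear Hall.
move: gh Hy Hl; case: g h => [] [] // _; case: a; case: b => //=.
all: by move: (last y ys) => l; case: y => //; case: l.
Qed.

Lemma trivial_pos_telescope u : cycle non_inverse u ->
  trivial_pos g h u + in_pos_run g h u = end_pos_run g h u + in_pos_run g h (rot 1 u).
Proof.
case: u => [|a [|b t]]; first by move: gh; case: g h => [] [].
  by rewrite /trivial_pos /in_pos_run /end_pos_run /gens_after trivial_at_single /= !andbF.
case/andP => Rab _; rewrite /trivial_pos /in_pos_run /end_pos_run /gens_after rot1_cons.
rewrite trivial_at_cons2 /= filter_rcons; move: (filter (of_gen g) t) => ys.
move: gh Rab; case: g h => [] [] // _; case: a; case: b => //= _.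
all: case: ys => [|y ys] //=; rewrite ?last_rcons //.
all: by move: (last y ys) => l; case: y; case: l.
Qed.

Lemma trivial_count_rsum v :
  trivial_count g (of_gen h) v = rsum (fun u => trivial_at g (of_gen h) u : nat) v.
Proof. by rewrite /trivial_count /rsum sumn_count count_map. Qed.

Lemma cancellation_without_bad v : cycle non_inverse v -> bad_count g h v = 0 ->
  cancelled_pairs (transvection g h) v = trivial_count g (of_gen h) v.
Proof.
move=> Hv bad0; have no_bad u : u \in rots v -> ~~ bad_at g h u.
  move=> u_in; apply/negP => Hb.
  have : 0 < bad_count g h v by rewrite -has_count; apply/hasP; exists u.
  by rewrite bad0.
have neg_runs :
    rsum (fun u => trivial_neg g h u : nat) v = rsum (fun u => cancel_left g h u : nat) v.
  by apply: eq_rsum => u u_in; rewrite trivial_neg_cancel_left ?no_bad ?rot_in_rots.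
have pos_runs :
    rsum (fun u => trivial_pos g h u : nat) v = rsum (fun u => cancel_right g h u : nat) v.
  have -> : rsum (fun u => cancel_right g h u : nat) v =
            rsum (fun u => end_pos_run g h u : nat) v.
    by apply: eq_rsum => u u_in; rewrite end_pos_run_cancel_right ?no_bad.
  (* each [g h^r g^-1] is moved from its first letter to its last [h] *)
  apply/eqP; rewrite -(eqn_add2r (rsum (fun u => in_pos_run g h u : nat) v)) -rsumD.
  rewrite -[X in _ + X]rsum_rot1 -rsumD; apply/eqP/eq_rsum => u u_in /=.
  by apply: trivial_pos_telescope; rewrite (cycle_in_rots _ u_in).
rewrite cancelled_pairs_rsum // trivial_count_rsum.
rewrite (eq_rsum (fun u _ => cancel_splitE u)) (eq_rsum (fun u _ => trivial_splitE u)).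
by rewrite !rsumD neg_runs pos_runs.
Qed.

End Counting.

(** * Chains *)

Lemma act_ext f f' : f =1 f' -> act f =1 act f'.
Proof. by move=> E w; rewrite /act /subst (eq_map E). Qed.

Lemma cancelled_pairs_ext f f' : f =1 f' -> cancelled_pairs f =1 cancelled_pairs f'.
Proof. by move=> E w; rewrite /cancelled_pairs (act_ext E) /subst (eq_map E). Qed.

Lemma trivial_count_ext g P Q : P =1 Q -> trivial_count g P =1 trivial_count g Q.
Proof.
move=> E w; apply: eq_count => i; case: (rot i w) => [|a t] //=.
by rewrite (@eq_find _ (predC P) (predC Q)) // => c /=; rewrite E.
Qed.

Definition potential_step (f : letter -> seq letter) (Phi : seq letter -> nat) (d : nat) :=
  forall v, cycle non_inverse v -> cycle non_inverse (act f v) /\ Phi (act f v) <= Phi v - d.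

Lemma own_step g h f : admissible g h -> f =1 transvection g h ->
  potential_step f (bad_count g h) 1.
Proof.
move=> gh E v Hv; rewrite (act_ext E) act_transvection // subn1.
by split; [apply: cycle_cyc_image | apply: bad_count_own_image].
Qed.

Lemma dual_step g h g' h' f : dual_pair g h g' h' -> f =1 transvection g' h' ->
  potential_step f (bad_count g h) 0.
Proof.
move=> dual E v Hv; have [_ gh'] := dual_admissible dual.
rewrite (act_ext E) act_transvection // subn0.
by split; [apply: cycle_cyc_image | apply: bad_count_dual_image].
Qed.

Lemma iter_potential f Phi d n v : potential_step f Phi d -> cycle non_inverse v ->
  cycle non_inverse (iter n (act f) v) /\ Phi (iter n (act f) v) <= Phi v - n * d.
Proof.
move=> step Hv; elim: n => [|n [IH1 IH2]]; first by rewrite subn0.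
have [H1 H2] := step _ IH1; split=> //.
by rewrite mulSn addnC subnDA (leq_trans H2) // leq_sub2r.
Qed.

Lemma chain_potential fs ft Phi ds dt c v :
  potential_step fs Phi ds -> potential_step ft Phi dt -> cycle non_inverse v ->
  cycle non_inverse (chain_apply fs ft c v) /\
  Phi (chain_apply fs ft c v) <= Phi v - (ds * sum_l c + dt * sum_m c).
Proof.
move=> steps stept; rewrite /chain_apply /sum_l /sum_m.
elim: c v => [|lm c IH] v Hv /=; first by rewrite !big_nil !muln0 subn0.
have [A1 A2] := iter_potential lm.1 steps Hv.
have [B1 B2] := iter_potential lm.2 stept A1.
have [C1 C2] := IH _ B1; split=> //.
by move: A2 B2 C2; rewrite !big_cons; lia.
Qed.

Lemma no_proper_cancellation_chain g h f P fs ft ds dt c w :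
  f =1 transvection g h -> P =1 of_gen h -> admissible g h ->
  potential_step fs (bad_count g h) ds -> potential_step ft (bad_count g h) dt ->
  cycle non_inverse w -> size w <= ds * sum_l c + dt * sum_m c ->
  cancelled_pairs f (chain_apply fs ft c w) = trivial_count g P (chain_apply fs ft c w).
Proof.
move=> E EP gh steps stept Hw Hsize; rewrite (cancelled_pairs_ext E) (trivial_count_ext _ EP).
have [Hv Hbad] := chain_potential c steps stept Hw.
apply: cancellation_without_bad => //; apply/eqP; rewrite -leqn0.
by rewrite (leq_trans Hbad) // leqn0 subn_eq0 (leq_trans (bad_count_le_size _ _ _)).
Qed.

Theorem lemma2p5 (w : seq letter) (c : seq (nat * nat)) :
  cyc_reduced w ->
  (* (C1) chain tau^{m_k} sigma^{l_k} ... tau^{m_1} sigma^{l_1} *)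
  (size w <= sum_l c ->
     no_proper_cancellation_sigma sigma_img (chain_apply sigma_img tau_img c w)) /\
  (size w <= sum_m c ->
     no_proper_cancellation_tau tau_img (chain_apply sigma_img tau_img c w)) /\
  (* (C2) chain tau^{-m_k} sigma^{-l_k} ... tau^{-m_1} sigma^{-l_1} *)
  (size w <= sum_l c ->
     no_proper_cancellation_sigma sigmaI_img (chain_apply sigmaI_img tauI_img c w)) /\
  (size w <= sum_m c ->
     no_proper_cancellation_tau tauI_img (chain_apply sigmaI_img tauI_img c w)).
Proof.
rewrite cyc_reduced_cycle => Hw.
have Es : sigma_img =1 transvection lx ly by case.
have Et : tau_img =1 transvection ly lx by case.
have EsI : sigmaI_img =1 transvection lx lY by case.
have EtI : tauI_img =1 transvection ly lX by case.
have Ey : is_yletter =1 of_gen ly by case.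
have Ex : is_xletter =1 of_gen lx by case.
have EyI : is_yletter =1 of_gen lY by case.
have ExI : is_xletter =1 of_gen lX by case.
rewrite /no_proper_cancellation_sigma /no_proper_cancellation_tau.
split; [|split; [|split]] => Hs.
- apply: (no_proper_cancellation_chain Es Ey _ (own_step _ Es) (dual_step _ Et) Hw) => //.
  by rewrite mul1n mul0n addn0.
- apply: (no_proper_cancellation_chain Et Ex _ (dual_step _ Es) (own_step _ Et) Hw) => //.
  by rewrite mul1n mul0n.
- apply: (no_proper_cancellation_chain EsI EyI _ (own_step _ EsI) (dual_step _ EtI) Hw) => //.
  by rewrite mul1n mul0n addn0.
- apply: (no_proper_cancellation_chain EtI ExI _ (dual_step _ EsI) (own_step _ EtI) Hw) => //.
  by rewrite mul1n mul0n.
Qed.
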